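(* Let $C_2\subseteq C_1\subseteq\mathbb{F}_2^n$ be linear codes, $Q=Q(C_1,C_2)$ the corresponding CSS code, and $N=2^\ell$ with $\ell$ a positive integer. If $(1,\ldots,1)\in H_N$, then $C_2\subseteq (C_1^{\ell-1})^{\perp}$.
   Context: $\omega=e^{2\pi\mathbf{i}/N}$, $U(a)=\mathrm{diag}(1,\omega^a)$ for $a\in\mathbb{Z}_N$, $U(b)=\bigotimes_{i=1}^nU(b_i)$ for $b\in\mathbb{Z}_N^n$. $Q(C_1,C_2)$ is the subspace of $(\mathbb{C}^2)^{\otimes n}$ stabilized by all $X(u)Z(v)$, $u\in C_2$, $v\in C_1^\perp$ (Pauli operators $X(u)=\bigotimes X^{u_i}$, $Z(v)=\bigotimes Z^{v_i}$). $H_N=\{b\in\mathbb{Z}_N^n: U(b)Q=Q\}$. For $r\ge1$, $C_1^r=C_1\star\cdots\star C_1$ ($r$ times) is the $\mathbb{F}_2$-linear span of the componentwise products $c_1\star\cdots\star c_r$ with $c_i\in C_1$, and $C_1^0$ is the span of $(1,\ldots,1)$; $\perp$ is the dual over $\mathbb{F}_2$ with respect to the standard dot product. *)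

From HB Require Import structures.
From mathcomp Require Import all_boot all_order all_algebra.
From mathcomp Require Import algC.
Set Implicit Arguments. Unset Strict Implicit. Unset Printing Implicit Defensive.
Import Order.TTheory GRing.Theory Num.Theory.
Local Open Scope ring_scope.

Notation word n := 'rV['F_2]_n.

Definition dotF2 n (x y : word n) : 'F_2 := \sum_(i < n) x 0 i * y 0 i.

Definition dual n (C : {vspace word n}) : pred (word n) :=
  [pred v | [forall w : word n, (w \in C) ==> (dotF2 w v == 0)]].

(* Componentwise product c_1 * ... * c_r of a family of r words
   (for r = 0 this is the all-ones word). *)
Definition starprod n r (c : {ffun 'I_r -> word n}) : word n :=
  \row_(j < n) \prod_(i < r) c i 0 j.

Definition starpow n (C : {vspace word n}) (r : nat) : {vspace word n} :=
  if r is 0 then <[\row_(j < n) (1%R : 'F_2)]>%VS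
  else <<[seq starprod c | c <- enum [set c : {ffun 'I_r -> word n} |
                                        [forall i, c i \in C]]]>>%VS.

(* States of n qubits: functions from computational basis labels to C
   (algC = algebraic complex numbers); psi x = <x|psi>. *)
Definition state n := {ffun word n -> algC}.

Definition bit (a : 'F_2) : nat := nat_of_ord a.

(* Pauli X(u): |x> -> |x+u>;  Z(v): |x> -> (-1)^{v.x} |x>. *)
Definition PauliX n (u : word n) (psi : state n) : state n :=
  [ffun x => psi (x + u)].
Definition PauliZ n (v : word n) (psi : state n) : state n :=
  [ffun x => (-1) ^+ bit (dotF2 v x) * psi x].

Definition CSS n (C1 C2 : {vspace word n}) (psi : state n) : Prop :=
  forall u v : word n, u \in C2 -> v \in dual C1 ->
    PauliX u (PauliZ v psi) = psi.

(* omega = e^{2 pi i / N}: N.-root (-1) is e^{i pi / N} (minimal argument). *)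
Definition omega (N : nat) : algC := (N.-root (-1)) ^+ 2.

(* U(b) = (x) diag(1, omega^{b_i}), b in Z_N^n. *)
Definition Udiag (N : nat) n (b : 'rV['Z_N]_n) (psi : state n) : state n :=
  [ffun x : word n => (\prod_(i < n) omega N ^+ (nat_of_ord (b 0 i) * bit (x 0 i))) * psi x].

(* H_N = { b in Z_N^n : U(b) Q = Q } (image of Q under U(b) equals Q). *)
Definition H_N (N : nat) n (C1 C2 : {vspace word n}) (b : 'rV['Z_N]_n) : Prop :=
  (forall psi, CSS C1 C2 psi -> CSS C1 C2 (Udiag b psi)) /\
  (forall phi, CSS C1 C2 phi -> exists2 psi, CSS C1 C2 psi & phi = Udiag b psi).

From HB Require Import structures.
From mathcomp Require Import all_boot all_order all_algebra.
From mathcomp Require Import algC.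
Import Order.TTheory GRing.Theory Num.Theory.
Local Open Scope ring_scope.

(** For x in C1, the uniform superposition over the coset x + C2 lies in Q,
    and U(1,...,1) multiplies the amplitude of |y> by omega^(wt y).  Since the
    image is again fixed by X(u) for u in C2, and omega is a primitive 2^l-th
    root of unity, wt (x + u) = wt x (mod 2^l) for all x in C1 and u in C2.
    With wt (a + b) = wt a + wt b - 2 wt (a * b) (componentwise product), this
    congruence gives 2^(l-1) | wt (u * x) for x in C1, and every further
    factor taken from C1 costs at most one power of 2.  Hence
    wt (u * c_1 * ... * c_(l-1)) is even, i.e. u is orthogonal to C1^(l-1). *)

Lemma natr_bit (a : 'F_2) : (bit a)%:R = a.
Proof. by case: a => [[|[|[]]]] //= ?; apply/val_inj. Qed.

Lemma bitD_F2 (a b : 'F_2) : (bit (a + b)%R + 2 * bit (a * b)%R = bit a + bit b)%N.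
Proof. by case: a => [[|[|[]]]] //= ?; case: b => [[|[|[]]]] //= ?. Qed.

Lemma mulF2_idem (a : 'F_2) : a * a = a.
Proof. by case: a => [[|[|[]]]] //= ?; apply/val_inj. Qed.

Lemma natr_F2_eq0 k : ((k%:R : 'F_2) == 0) = (2 %| k)%N.
Proof. by rewrite -Fp_nat_mod // /dvdn modn2; case: (odd k). Qed.

Lemma dvdn_half k m : (2 ^ k %| 2 * m)%N -> (2 ^ k.-1 %| m)%N.
Proof. by case: k => [|k]; rewrite ?dvd1n // expnS dvdn_pmul2l. Qed.

Section Words.

Local Set Implicit Arguments.
Local Unset Strict Implicit.

Context {n : nat}.
Implicit Types (a b x u : word n) (C : {vspace word n}).

Definition wt a : nat := \sum_(i < n) bit (a 0%R i).

Definition star a b : word n := \row_j (a 0 j * b 0 j).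

Lemma wt0 : wt 0 = 0%N.
Proof. by rewrite /wt big1 // => i _; rewrite mxE. Qed.

Lemma wtD a b : (wt (a + b) + 2 * wt (star a b) = wt a + wt b)%N.
Proof.
rewrite /wt big_distrr -!big_split /=; apply: eq_bigr => i _.
by rewrite !mxE bitD_F2.
Qed.

Lemma starC a b : star a b = star b a.
Proof. by apply/rowP => j; rewrite !mxE mulrC. Qed.

Lemma starA a b (c : word n) : star a (star b c) = star (star a b) c.
Proof. by apply/rowP => j; rewrite !mxE mulrA. Qed.

Lemma wt_starD a x (c : word n) :
  (wt (star a (x + c)) + 2 * wt (star (star a c) x) =
   wt (star a x) + wt (star a c))%N.
Proof.
rewrite -wtD; congr (wt _ + 2 * wt _)%N; apply/rowP => j; rewrite !mxE.
- by rewrite mulrDr.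
- by rewrite mulrACA mulF2_idem mulrA mulrAC.
Qed.

Lemma starprod0 (c : {ffun 'I_0 -> word n}) : starprod c = \row_j 1.
Proof. by apply/rowP => j; rewrite !mxE big_ord0. Qed.

Lemma starprodSr r (c : {ffun 'I_r.+1 -> word n}) :
  starprod c = star (starprod [ffun i => c (widen_ord (leqnSn r) i)]) (c ord_max).
Proof.
apply/rowP => j; rewrite !mxE big_ord_recr /=.
by congr (_ * _); apply: eq_bigr => i _; rewrite ffunE.
Qed.

Lemma star1r a : star (\row_j 1) a = a.
Proof. by apply/rowP => j; rewrite !mxE mul1r. Qed.

Lemma dotF2_wt a b : dotF2 a b = (wt (star a b))%:R.
Proof. by rewrite /dotF2 /wt natr_sum; apply: eq_bigr => i _; rewrite mxE natr_bit. Qed.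

Lemma dotF2C a b : dotF2 a b = dotF2 b a.
Proof. by apply: eq_bigr => i _; rewrite mulrC. Qed.

Lemma dotF2_mx a b : dotF2 a b = (a *m b^T) 0 0.
Proof. by rewrite mxE; apply: eq_bigr => i _; rewrite mxE. Qed.

Lemma dotF2r0 a : dotF2 a 0 = 0.
Proof. by rewrite /dotF2 big1 // => i _; rewrite mxE mulr0. Qed.

Lemma mem_dual0 C : 0 \in dual C.
Proof. by apply/forallP => w; rewrite dotF2r0 implybT. Qed.

Lemma dual_span (X : seq (word n)) u :
  {in X, forall w, dotF2 w u = 0} -> u \in dual <<X>>%VS.
Proof.
move=> Xu; apply/forallP => w; apply/implyP => /(coord_span (X := in_tuple X)) ->.
rewrite dotF2_mx mulmx_suml summxE big1 // => i _.
by rewrite -scalemxAl mxE -dotF2_mx Xu ?mulr0 // mem_nth.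
Qed.

Lemma starpowE C r :
  starpow C r = <<[seq starprod c | c <- enum [set c : {ffun 'I_r -> word n} |
                                                 [forall i, c i \in C]]]>>%VS.
Proof.
case: r => //.
have -> : [set c : {ffun 'I_0 -> word n} | [forall i, c i \in C]] = [set [ffun=> 0]].
  by apply/setP => c; rewrite !inE; apply/forallP/eqP => _; [apply/ffunP|] => -[].
by rewrite enum_set1 /= span_seq1 starprod0.
Qed.

Lemma mem_dual_starpow C r u :
  (forall c : {ffun 'I_r -> word n}, (forall i, c i \in C) -> dotF2 (starprod c) u = 0) ->
  u \in dual (starpow C r).
Proof.
move=> Cu; rewrite starpowE; apply: dual_span => w /mapP [c].
by rewrite mem_enum inE => /forallP cC ->; apply: Cu.
Qed.

Definition wt_star_dvd k C a := {in C, forall x, (2 ^ k %| wt (star a x))%N}.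

Lemma wt_star_dvd_star k C a (c : word n) :
  wt_star_dvd k C a -> c \in C -> wt_star_dvd k.-1 C (star a c).
Proof.
move=> a_dvd cC x xC; apply: dvdn_half.
rewrite -(dvdn_addr _ (a_dvd _ (memvD xC cC))) wt_starD.
by rewrite dvdn_add ?a_dvd.
Qed.

Lemma wt_star_dvd_starprod k C a r (c : {ffun 'I_r -> word n}) :
  wt_star_dvd k C a -> (forall i, c i \in C) ->
  wt_star_dvd (k - r) C (star a (starprod c)).
Proof.
move=> a_dvd; elim: r c => [|r IHr] c cC.
  by rewrite starprod0 starC star1r subn0.
rewrite starprodSr starA subnS; apply: wt_star_dvd_star => //.
by apply: IHr => i; rewrite ffunE.
Qed.

Lemma dual_starpow_of_wt_star_dvd k C a :
  (2 ^ k.+1 %| wt a)%N -> wt_star_dvd k C a -> a \in dual (starpow C k).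
Proof.
move=> a_dvd a_star_dvd; apply: mem_dual_starpow => c cC; apply/eqP.
rewrite dotF2C dotF2_wt natr_F2_eq0.
case: k c cC a_dvd a_star_dvd => [|r] c cC a_dvd a_star_dvd.
- by rewrite starprod0 starC star1r.
- have c'C (i : 'I_r) : [ffun i => c (widen_ord (leqnSn r) i)] i \in C.
    by rewrite ffunE.
  rewrite starprodSr starA.
  by have := wt_star_dvd_starprod a_star_dvd c'C; rewrite subSnn; apply.
Qed.

Section WeightCongruence.

Variables (l : nat) (C : {vspace word n}) (u : word n).
Hypothesis wt_mod : {in C, forall x, wt (x + u) = wt x %[mod 2 ^ l]}.

Lemma dvdn_wt_of_wt_mod : (2 ^ l %| wt u)%N.
Proof. by have := wt_mod (mem0v C); rewrite add0r wt0 mod0n => /eqP. Qed.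

Lemma wt_star_dvd_of_wt_mod : wt_star_dvd l.-1 C u.
Proof.
move=> x xC; apply: dvdn_half; rewrite starC.
have : (wt x + 2 * wt (star x u) = wt x + 0 %[mod 2 ^ l])%N.
  rewrite -modnDml -(wt_mod xC) modnDml wtD -modnDmr.
  by move: dvdn_wt_of_wt_mod; rewrite /dvdn => /eqP ->.
by move/eqP; rewrite eqn_modDl mod0n.
Qed.

Lemma dual_starpow_of_wt_mod : (0 < l)%N -> u \in dual (starpow C l.-1).
Proof.
move=> l_gt0; apply: dual_starpow_of_wt_star_dvd wt_star_dvd_of_wt_mod.
by rewrite prednK // dvdn_wt_of_wt_mod.
Qed.

End WeightCongruence.

Lemma Udiag_const1 N psi :
  Udiag (const_mx 1 : 'rV['Z_N]_n) psi = [ffun x => omega N ^+ wt x * psi x].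
Proof.
apply/ffunP => x; rewrite !ffunE prodrXr; congr (_ ^+ _ * _).
by apply: eq_bigr => i _; rewrite mxE /= modn_small // mul1n.
Qed.

Lemma PauliZ0 psi : PauliZ (0 : word n) psi = psi.
Proof. by apply/ffunP => x; rewrite ffunE dotF2C dotF2r0 mul1r. Qed.

Definition coset_state C x : state n := [ffun y => ((y - x) \in C)%:R].

Lemma CSS_coset_state C1 C2 x :
  (C2 <= C1)%VS -> x \in C1 -> CSS C1 C2 (coset_state C2 x).
Proof.
move=> sC12 xC1 u v uC2 vD; apply/ffunP => y; rewrite !ffunE addrAC rpredDr //.
have [yxC2|] := boolP (y - x \in C2); last by rewrite mulr0.
have yC1 : y + u \in C1.
  by rewrite -(subrK x y) addrAC rpredD // (subvP sC12) // rpredD.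
move/forallP: vD => /(_ (y + u)) /implyP /(_ yC1) /eqP.
by rewrite dotF2C => ->; rewrite expr0 mul1r.
Qed.

Lemma wt_mod_of_H_N N C1 C2 :
  (C2 <= C1)%VS -> N.-primitive_root (omega N) ->
  H_N C1 C2 (const_mx 1 : 'rV['Z_N]_n) ->
  {in C1 & C2, forall x u, wt (x + u) = wt x %[mod N]}.
Proof.
move=> sC12 omega_prim [U_CSS _] x u xC1 uC2.
have := U_CSS _ (CSS_coset_state sC12 xC1) u 0 uC2 (mem_dual0 C1).
rewrite PauliZ0 Udiag_const1 => /ffunP /(_ x); rewrite !ffunE.
rewrite addrAC subrr add0r uC2 mem0v !mulr1 => /eqP.
by rewrite (eq_prim_root_expr omega_prim) => /eqP.
Qed.

End Words.

(* The order of (2^l).-root (-1) divides 2^(l+1) but not 2^l; for N not a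
   power of 2 this does not determine the order of N.-root (-1). *)
Lemma omega_pow2_prim l : (2 ^ l).-primitive_root (omega (2 ^ l)).
Proof.
have N_gt0 (k : nat) : (0 < 2 ^ k)%N by rewrite expn_gt0.
set r := (2 ^ l).-root (-1 : algC).
have rN : r ^+ (2 ^ l) = -1 by rewrite rootCK.
have r2N : r ^+ (2 ^ l.+1) = 1 by rewrite expnSr exprM rN sqrrN expr1n.
have [m r_prim m_dvd] := prim_order_exists (N_gt0 l.+1) r2N.
have m_def : m = (2 ^ l.+1)%N.
  case/(dvdn_pfactor _ _ (isT : prime 2)): m_dvd => e.
  rewrite leq_eqVlt => /orP [/eqP -> // | e_lt m_eq].
  have : (m %| 2 ^ l)%N by rewrite m_eq dvdn_exp2l.
  by rewrite (prim_order_dvd r_prim) rN (lt_eqF (lt_trans (ltrN10 _) ltr01)).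
rewrite m_def in r_prim.
have := dvdn_prim_root r_prim (dvdn_exp2l 2 (leqnSn l)).
by rewrite expnS mulnK.
Qed.

Theorem corollary3p4 (n l : nat) (C1 C2 : {vspace 'rV['F_2]_n}) :
  (C2 <= C1)%VS -> (0 < l)%N ->
  H_N C1 C2 (const_mx 1 : 'rV['Z_(2 ^ l)]_n) ->
  forall u : 'rV['F_2]_n, u \in C2 -> u \in dual (starpow C1 l.-1).
Proof.
move=> sC12 l_gt0 HN u uC2.
apply: dual_starpow_of_wt_mod => // x xC1.
exact: wt_mod_of_H_N sC12 (omega_pow2_prim l) HN x u xC1 uC2.
Qed.
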